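(* Let $(p,s)$ be $(1,2)$ or $(2,1)$, let $r,t\in S$ (initial and target state), and let $\overline{f_1},\overline{f_2}$ be reals. For a state $u$ from which $t$ is reachable, let $\pi^p_u$ be a $u$-$t$ path lexicographically minimal in $(\mathit{cost}_p,\mathit{cost}_s)$ and $\pi^s_u$ a $u$-$t$ path lexicographically minimal in $(\mathit{cost}_s,\mathit{cost}_p)$, and set $h_p(u)=\mathit{cost}_p(\pi^p_u)$, $ub_s(u)=\mathit{cost}_s(\pi^p_u)$, $h_s(u)=\mathit{cost}_s(\pi^s_u)$, $ub_p(u)=\mathit{cost}_p(\pi^s_u)$. Let $P$ be a path from $r$ to $u$ with $g_q=\mathit{cost}_q(P)$, which is valid, i.e. $g_1+h_1(u)\le\overline{f_1}$ and $g_2+h_2(u)\le\overline{f_2}$, and which is terminal, i.e. $h_p(u)=ub_p(u)$. Then $P$ is a tentative solution: $g_s+ub_s(u)\le\overline{f_s}$, so that $P$ followed by $\pi^p_u$ is an $r$-$t$ path with $\mathit{cost}_p=g_p+h_p(u)\le\overline{f_p}$ and $\mathit{cost}_s\le\overline{f_s}$.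
   Context: $G=(S,E)$ is a directed graph with non-negative edge costs $\mathit{cost}_1,\mathit{cost}_2$; a path is a sequence of states with consecutive pairs in $E$, and $\mathit{cost}_q$ of a path is the sum of $\mathit{cost}_q$ over its edges. *)

From Stdlib Require Import Reals List.
Open Scope R_scope.

Section Graph.
Variable S : Type.

Fixpoint is_walk (E : S -> S -> Prop) (p : list S) : Prop :=
  match p with
  | x :: ((y :: _) as q) => E x y /\ is_walk E q
  | _ => True
  end.

Definition is_path (E : S -> S -> Prop) (a b : S) (p : list S) : Prop :=
  hd_error p = Some a /\ last p a = b /\ is_walk E p.

Fixpoint pcost (c : S -> S -> R) (p : list S) : R :=
  match p with
  | x :: ((y :: _) as q) => c x y + pcost c q
  | _ => 0
  end.

Definition lexmin_path (E : S -> S -> Prop) (ca cb : S -> S -> R)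
    (u t : S) (pi : list S) : Prop :=
  is_path E u t pi /\
  forall pi', is_path E u t pi' ->
    pcost ca pi < pcost ca pi' \/
    (pcost ca pi = pcost ca pi' /\ pcost cb pi <= pcost cb pi').
End Graph.

Arguments is_walk {S}.
Arguments is_path {S}.
Arguments pcost {S}.
Arguments lexmin_path {S}.

Definition sel {A : Type} (q : nat) (a1 a2 : A) : A :=
  if Nat.eqb q 1 then a1 else a2.

From Stdlib Require Import Reals List Lra.
Import ListNotations.
Open Scope R_scope.

(* Terminality says that pi^p ties with pi^s in the primary cost, so the
   lexicographic minimality of pi^p forces ub_s(u) = cost_s(pi^p) <=
   cost_s(pi^s) = h_s(u), and validity then gives g_s + ub_s(u) <= fbar_s.
   The remaining claims only say that gluing paths at u adds their costs. *)

Section Concatenation.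
Context {S : Type}.
Implicit Types (E : S -> S -> Prop) (c : S -> S -> R) (l q : list S).

Lemma hd_error_app_cons l (u : S) q :
  hd_error (l ++ u :: q) = hd_error (l ++ [u]).
Proof. now destruct l. Qed.

Lemma last_app_cons l (u : S) q d : last (l ++ u :: q) d = last (u :: q) d.
Proof.
  induction l as [|x [|y l] IH]; [reflexivity | reflexivity | exact IH].
Qed.

Lemma last_cons_default (u : S) q d d' : last (u :: q) d = last (u :: q) d'.
Proof.
  revert u; induction q as [|v q IH]; intro u; [reflexivity|].
  exact (IH v).
Qed.

Lemma is_walk_app_cons E l (u : S) q :
  is_walk E (l ++ [u]) -> is_walk E (u :: q) -> is_walk E (l ++ u :: q).
Proof.
  induction l as [|x [|y l] IH]; simpl; [tauto| |]; intros [Hxy Hl] Hq.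
  - split; assumption.
  - split; [assumption | exact (IH Hl Hq)].
Qed.

Lemma pcost_app_cons c l (u : S) q :
  pcost c (l ++ u :: q) = pcost c (l ++ [u]) + pcost c (u :: q).
Proof.
  induction l as [|x [|y l] IH]; simpl; [ring | ring |].
  simpl in IH; rewrite IH; ring.
Qed.

Lemma is_path_cons {E} {a b : S} {p} : is_path E a b p -> exists q, p = a :: q.
Proof.
  intros [Hhd _]; destruct p as [|x q]; [discriminate|].
  injection Hhd as ->; now exists q.
Qed.

Lemma is_path_snoc {E} {a b : S} {p} : is_path E a b p -> exists l, p = l ++ [b].
Proof.
  intros [Hhd [Hlast _]]; exists (removelast p).
  rewrite <- Hlast; apply app_removelast_last.
  now intros ->.
Qed.

Lemma is_path_app_tl {E} {r u t : S} {P pi} :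
  is_path E r u P -> is_path E u t pi -> is_path E r t (P ++ tl pi).
Proof.
  intros HP Hpi.
  destruct (is_path_snoc HP) as [l ->]; destruct (is_path_cons Hpi) as [q ->].
  destruct HP as [HPhd [_ HPwalk]]; destruct Hpi as [_ [Hpilast Hpiwalk]].
  simpl tl; rewrite <- app_assoc; simpl app.
  repeat split.
  - now rewrite hd_error_app_cons.
  - now rewrite last_app_cons, (last_cons_default u q r u).
  - now apply is_walk_app_cons.
Qed.

Lemma pcost_app_tl {E} c {r u t : S} {P pi} :
  is_path E r u P -> is_path E u t pi -> pcost c (P ++ tl pi) = pcost c P + pcost c pi.
Proof.
  intros HP Hpi.
  destruct (is_path_snoc HP) as [l ->]; destruct (is_path_cons Hpi) as [q ->].
  simpl tl; rewrite <- app_assoc; apply pcost_app_cons.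
Qed.

End Concatenation.

Lemma lexmin_path_tie_le {S : Type} {E : S -> S -> Prop} {ca cb : S -> S -> R}
    {u t : S} {pi pi'} :
  lexmin_path E ca cb u t pi -> is_path E u t pi' ->
  pcost ca pi = pcost ca pi' -> pcost cb pi <= pcost cb pi'.
Proof.
  intros [_ Hmin] Hpi' Htie.
  destruct (Hmin pi' Hpi') as [Hlt | [_ Hle]]; [lra | exact Hle].
Qed.

Lemma terminal_path_tentative {S : Type} {E : S -> S -> Prop} {ca cb : S -> S -> R}
    {r u t : S} {fa fb : R} {pia pib P} :
  lexmin_path E ca cb u t pia -> is_path E u t pib -> is_path E r u P ->
  pcost ca P + pcost ca pia <= fa ->
  pcost cb P + pcost cb pib <= fb ->
  pcost ca pia = pcost ca pib ->
  pcost cb P + pcost cb pia <= fb /\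
  is_path E r t (P ++ tl pia) /\
  pcost ca (P ++ tl pia) = pcost ca P + pcost ca pia /\
  pcost ca P + pcost ca pia <= fa /\
  pcost cb (P ++ tl pia) <= fb.
Proof.
  intros Hpia Hpib HP Hfa Hfb Hterm.
  pose proof (lexmin_path_tie_le Hpia Hpib Hterm) as Hub.
  pose proof (proj1 Hpia) as Hpath.
  rewrite !(pcost_app_tl _ HP Hpath).
  split; [lra|]; split; [exact (is_path_app_tl HP Hpath)|].
  split; [reflexivity|]; split; [assumption | lra].
Qed.

(* pi1 = lexmin path u->t in (cost1,cost2), pi2 = lexmin in (cost2,cost1).
   h_1(u) = cost1 pi1, ub_2(u) = cost2 pi1, h_2(u) = cost2 pi2, ub_1(u) = cost1 pi2.
   pi^p = sel p pi1 pi2, pi^s = sel s pi1 pi2. *)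
Theorem lemma11 (S : Type) (E : S -> S -> Prop) (cost1 cost2 : S -> S -> R)
  (hc1 : forall x y, E x y -> 0 <= cost1 x y)
  (hc2 : forall x y, E x y -> 0 <= cost2 x y)
  (p s : nat) (hps : (p, s) = (1%nat, 2%nat) \/ (p, s) = (2%nat, 1%nat))
  (r t u : S) (fbar1 fbar2 : R)
  (pi1 pi2 : list S)
  (hpi1 : lexmin_path E cost1 cost2 u t pi1)
  (hpi2 : lexmin_path E cost2 cost1 u t pi2)
  (P : list S) (hP : is_path E r u P)
  (hvalid1 : pcost cost1 P + pcost cost1 pi1 <= fbar1)
  (hvalid2 : pcost cost2 P + pcost cost2 pi2 <= fbar2)
  (hterm : pcost (sel p cost1 cost2) (sel p pi1 pi2)
           = pcost (sel p cost1 cost2) (sel s pi1 pi2)) :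
  pcost (sel s cost1 cost2) P + pcost (sel s cost1 cost2) (sel p pi1 pi2)
    <= sel s fbar1 fbar2 /\
  is_path E r t (P ++ tl (sel p pi1 pi2)) /\
  pcost (sel p cost1 cost2) (P ++ tl (sel p pi1 pi2))
    = pcost (sel p cost1 cost2) P + pcost (sel p cost1 cost2) (sel p pi1 pi2) /\
  pcost (sel p cost1 cost2) P + pcost (sel p cost1 cost2) (sel p pi1 pi2)
    <= sel p fbar1 fbar2 /\
  pcost (sel s cost1 cost2) (P ++ tl (sel p pi1 pi2)) <= sel s fbar1 fbar2.
Proof.
  destruct hps as [Hps | Hps]; injection Hps as -> ->; unfold sel in *; simpl in *.
  - exact (terminal_path_tentative hpi1 (proj1 hpi2) hP hvalid1 hvalid2 hterm).
  - exact (terminal_path_tentative hpi2 (proj1 hpi1) hP hvalid2 hvalid1 hterm).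
Qed.
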